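(* Let $\mathcal X,\mathcal Y$ be Polish spaces, $c:\mathcal X\times\mathcal Y\to\mathbb R$ a measurable cost function bounded from below, $\varepsilon>0$, and $\tilde\mu\in\mathcal P(\mathcal X)$. Let $\mathcal F\subseteq L^{\exp}_\varepsilon(\tilde\mu)$ be a class of functions on $\mathcal X$, and let $\mathcal F^{(c,\varepsilon)}_{\tilde\mu}=\{\phi^{(c,\varepsilon)}_{\tilde\mu}\mid\phi\in\mathcal F\}$. Then for every $\delta>0$, \[ N(\delta,\mathcal F^{(c,\varepsilon)}_{\tilde\mu},\|\cdot\|_\infty)\le N(\delta/2,\mathcal F,\|\cdot\|_\infty). \]
   Context: $\exp_\varepsilon(t)=\exp(t/\varepsilon)$. $L^{\exp}_\varepsilon(\tilde\mu)$ is the set of measurable $\phi:\mathcal X\to[-\infty,\infty)$ with $0<\int\exp_\varepsilon(\phi)\,d\tilde\mu<\infty$. For such $\phi$, $\phi^{(c,\varepsilon)}_{\tilde\mu}(y)=-\varepsilon\log\int_{\mathcal X}\exp_\varepsilon(\phi(x)-c(x,y))\,d\tilde\mu(x)$, $y\in\mathcal Y$. For a class $\mathcal G$ of real-valued functions on a set $S$ and $\delta>0$, the uniform covering number $N(\delta,\mathcal G,\|\cdot\|_\infty)$ is the smallest $n\in\mathbb N$ such that there exist $f_1,\dots,f_n:S\to\mathbb R$ with $\sup_{f\in\mathcal G}\min_i\|f-f_i\|_\infty\le\delta$ (and $+\infty$ if no such $n$ exists), where $\|f\|_\infty=\sup_{s\in S}|f(s)|$. *)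

From HB Require Import structures.
From mathcomp Require Import all_boot all_order all_algebra.
From mathcomp Require Import all_classical all_reals all_analysis.
From mathcomp Require Import measurable_realfun.
Set Implicit Arguments. Unset Strict Implicit. Unset Printing Implicit Defensive.
Import Order.TTheory GRing.Theory Num.Theory.
Local Open Scope classical_set_scope.
Local Open Scope ring_scope.

(* Polish space: a complete metric space (Hausdorff, so the pseudometric is a
   metric) that is separable (has a countable dense subset). *)
Definition polish_space (R : realType) (T : completePseudoMetricType R) : Prop :=
  hausdorff_space T /\ exists D : set T, countable D /\ dense D.

Definition borelType (R : realType) (T : completePseudoMetricType R) :=
  g_sigma_algebraType (@open T).

Local Open Scope ereal_scope.

(* exp_eps(t) = exp(t / eps), on extended reals (exp(-oo) = 0). *)
Definition exp_eps (R : realType) (eps : R) (t : \bar R) : \bar R :=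
  expeR (t * (eps^-1)%:E).

Definition Lexp (R : realType) (d : measure_display) (X : measurableType d)
  (mu : set X -> \bar R) (eps : R) (phi : X -> \bar R) : Prop :=
  [/\ measurable_fun setT phi, (forall x, phi x != +oo),
      0 < \int[mu]_x exp_eps eps (phi x)
    & \int[mu]_x exp_eps eps (phi x) < +oo].

Definition ce_transform (R : realType) (d : measure_display) (X : measurableType d)
  (Y : Type) (mu : set X -> \bar R) (c : X * Y -> R) (eps : R)
  (phi : X -> \bar R) (y : Y) : R :=
  (- eps * ln (fine (\int[mu]_x exp_eps eps (phi x - (c (x, y))%:E))))%R.

Definition supdist (R : realType) (S : Type) (f : S -> \bar R) (g : S -> R) : \bar R :=
  ereal_sup [set `|f s - (g s)%:E| | s in [set: S]].

Definition is_cover (R : realType) (S : Type) (G : set (S -> \bar R)) (delta : R)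
  (n : nat) : Prop :=
  exists fs : nat -> S -> R,
    forall f, G f -> exists i, (i < n)%N /\ supdist f (fs i) <= delta%:E.

(* uniform covering number N(delta, G, ||.||_oo); +oo if no finite cover *)
Definition covering_number (R : realType) (S : Type) (G : set (S -> \bar R))
  (delta : R) : \bar R :=
  ereal_inf [set (n%:R)%:E | n in is_cover G delta].

From HB Require Import structures.
From mathcomp Require Import all_boot all_order all_algebra.
From mathcomp Require Import all_classical all_reals all_analysis.
From mathcomp Require Import measurable_realfun.
From mathcomp Require Import lra.
Set Implicit Arguments.
Unset Strict Implicit.
Unset Printing Implicit Defensive.
Import Order.TTheory GRing.Theory Num.Theory.
Local Open Scope classical_set_scope.
Local Open Scope ring_scope.
Local Open Scope ereal_scope.

(* If two potentials differ by at most r pointwise, the integrands defining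
   their (c,eps)-transforms differ by a factor at most exp(r/eps) in either
   direction, so the transforms, being -eps times the logarithms of the
   integrals, differ by at most r.  Hence a (delta/2)-cover of F gives a
   delta-cover of its transforms: each centre is replaced by the transform of
   some element of F within delta/2 of it, which lies within delta of every
   other such element.  Potentials within a finite sup-distance of a real
   function are themselves real-valued, and apart from that only the
   measurability of c and of the potentials is used. *)

Lemma ln_fine_dist_le (R : realType) (a b : \bar R) (K : R) :
  0 <= a -> 0 <= b -> (1 <= K)%R -> a <= K%:E * b -> b <= K%:E * a ->
  (`|ln (fine a) - ln (fine b)| <= ln K)%R.
Proof.
move=> a0 b0 K1 ab ba.
have K0 : (0 < K)%R by apply: lt_le_trans K1.
have lnK0 : (0 <= ln K)%R by apply: ln_ge0.
case: a a0 ab ba => [r| |] //= a0 ab ba; case: b b0 ab ba => [s| |] //= b0 ab ba;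
  last by rewrite subrr normr0.
rewrite lee_fin in a0; rewrite lee_fin in b0.
rewrite -EFinM lee_fin in ab; rewrite -EFinM lee_fin in ba.
have [r0|r_neq0] := eqVneq r 0%R.
  rewrite r0 mulr0 in ba; rewrite r0.
  have -> : s = 0%R by apply/eqP; rewrite eq_le b0 andbT.
  by rewrite subrr normr0.
have r_gt0 : (0 < r)%R by rewrite lt_def r_neq0 a0.
have s_gt0 : (0 < s)%R by rewrite -(pmulr_rgt0 _ K0); exact: lt_le_trans r_gt0 ab.
rewrite ler_norml; apply/andP; split.
- have : (ln s <= ln (K * r))%R by rewrite ler_ln ?posrE ?mulr_gt0.
  rewrite lnM ?posrE //; lra.
- have : (ln r <= ln (K * s))%R by rewrite ler_ln ?posrE ?mulr_gt0.
  rewrite lnM ?posrE //; lra.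
Qed.

Lemma integral_exp_eps_le d (T : measurableType d) (R : realType)
  (mu : {measure set T -> \bar R}) (eps : R) (f g : T -> R) (r : R) :
  (0 < eps)%R -> measurable_fun setT f -> measurable_fun setT g ->
  (forall x, (f x <= g x + r)%R) ->
  \int[mu]_x exp_eps eps (f x)%:E <=
  exp_eps eps r%:E * \int[mu]_x exp_eps eps (g x)%:E.
Proof.
move=> eps_gt0 mf mg fg.
have m_exp_eps (h : T -> R) : measurable_fun setT h ->
    measurable_fun setT (fun x => exp_eps eps (h x)%:E).
  move=> mh; apply/measurable_EFinP.
  by apply: measurableT_comp; [exact: measurable_expR | exact: measurable_funM].
have exp_eps_ge0 (h : T -> R) x : [set: T] x -> 0 <= exp_eps eps (h x)%:E.
  by rewrite expeR_ge0.
rewrite -ge0_integralZl ?expeR_ge0 //; [|exact: m_exp_eps mg|exact: exp_eps_ge0].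
apply: ge0_le_integral => //; [exact: exp_eps_ge0 | exact: m_exp_eps mf | |].
  exact: emeasurable_funM (measurable_cst _) (m_exp_eps _ mg).
move=> x _; rewrite /exp_eps /= -EFinM lee_fin -expRD ler_expR -mulrDl.
by rewrite ler_pM2r ?invr_gt0 // addrC.
Qed.

Lemma ce_transform_dist_le d (T : measurableType d) (R : realType) (Y : Type)
  (mu : {measure set T -> \bar R}) (c : T * Y -> R) (eps : R) (f g : T -> R)
  (r : R) (y : Y) :
  (0 < eps)%R -> (0 <= r)%R -> measurable_fun setT (fun x => c (x, y)) ->
  measurable_fun setT f -> measurable_fun setT g ->
  (forall x, `|f x - g x| <= r)%R ->
  (`|ce_transform mu c eps (fun x => (f x)%:E) y -
     ce_transform mu c eps (fun x => (g x)%:E) y| <= r)%R.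
Proof.
move=> eps_gt0 r_ge0 mc mf mg fg.
have mB (h : T -> R) : measurable_fun setT h ->
    measurable_fun setT (fun x => h x - c (x, y))%R by move=> mh; exact: measurable_funB.
have shifted_le (h k : T -> R) : measurable_fun setT h -> measurable_fun setT k ->
    (forall x, h x <= k x + r)%R ->
    \int[mu]_x exp_eps eps (h x - c (x, y))%:E <=
    (expR (r / eps))%:E * \int[mu]_x exp_eps eps (k x - c (x, y))%:E.
  move=> mh mk hk; apply: integral_exp_eps_le (mB _ mh) (mB _ mk) _ => // x.
  by have := hk x; lra.
have int_ge0 (h : T -> R) : 0 <= \int[mu]_x exp_eps eps (h x - c (x, y))%:E.
  by apply: integral_ge0 => x _; rewrite expeR_ge0.
have K_ge1 : (1 <= expR (r / eps))%R by rewrite -expR0 ler_expR divr_ge0 // ltW.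
have [fg_le gf_le] : (forall x, f x <= g x + r)%R /\ (forall x, g x <= f x + r)%R.
  by split=> x; have := fg x; rewrite ler_norml; lra.
have := ln_fine_dist_le (int_ge0 f) (int_ge0 g) K_ge1
  (shifted_le _ _ mf mg fg_le) (shifted_le _ _ mg mf gf_le).
rewrite expRK => ln_dist_le.
rewrite /ce_transform !mulNr opprK addrC -mulrBr normrM gtr0_norm //.
by rewrite distrC -ler_pdivlMl // mulrC.
Qed.

Lemma supdist_le_EFin (R : realType) (S : Type) (phi : S -> \bar R) (g : S -> R)
  (k : R) : supdist phi g <= k%:E ->
  exists f : S -> R, phi = (fun s => (f s)%:E) /\ forall s, (`|f s - g s| <= k)%R.
Proof.
move=> phig.
have dist_le s : `|phi s - (g s)%:E| <= k%:E.
  by apply: le_trans phig; apply: ereal_sup_ubound; exists s.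
exists (fine \o phi); split.
  by apply/funext => s /=; move: (dist_le s); case: (phi s).
by move=> s /=; move: (dist_le s); case: (phi s) => //= t; rewrite -EFinB abse_EFin lee_fin.
Qed.

Lemma covering_number_image_le (R : realType) (S S' : Type) (G : set (S -> \bar R))
  (h : (S -> \bar R) -> S' -> R) (r r' : R) :
  (forall phi psi g, G phi -> G psi ->
     supdist phi g <= r%:E -> supdist psi g <= r%:E ->
     supdist (fun s => (h phi s)%:E) (h psi) <= r'%:E) ->
  covering_number [set (fun s => (h phi s)%:E) | phi in G] r' <=
  covering_number G r.
Proof.
move=> h_close; apply: ereal_inf_le_tmp => _ [n [fs cover_fs] <-]; exists n => //.
have : forall i, exists hi : S' -> R, forall phi, G phi -> supdist phi (fs i) <= r%:E ->
    supdist (fun s => (h phi s)%:E) hi <= r'%:E.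
  move=> i; have [[psi [Gpsi psi_i]]|no_psi] :=
    pselect (exists psi, G psi /\ supdist psi (fs i) <= r%:E).
    by exists (h psi) => phi Gphi phi_i; exact: h_close Gphi Gpsi phi_i psi_i.
  by exists (fun _ => 0%R) => phi Gphi phi_i; case: no_psi; exists phi.
move=> /choice[hs close_hs]; exists hs => _ [phi Gphi <-].
have [i [ltin phi_i]] := cover_fs phi Gphi.
by exists i; split => //; apply: close_hs.
Qed.

Theorem mainTheorem3 (R : realType)
  (X Y : completePseudoMetricType R)
  (hX : polish_space X) (hY : polish_space Y)
  (c : (borelType X * borelType Y)%type -> R)
  (hc_meas : measurable_fun setT c)
  (hc_low : exists b : R, forall p, (b <= c p)%R)
  (eps : R) (heps : (0 < eps)%R)
  (mu : probability (borelType X) R)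
  (F : set (borelType X -> \bar R))
  (hF : forall phi, F phi -> Lexp mu eps phi)
  (delta : R) (hdelta : (0 < delta)%R) :
  covering_number
    [set (fun y : borelType Y => (ce_transform mu c eps phi y)%:E) | phi in F]
    delta
  <= covering_number F (delta / 2).
Proof.
apply: covering_number_image_le => phi psi g /hF[mphi _ _ _] /hF[mpsi _ _ _].
move=> /supdist_le_EFin[f [phi_f fg]] /supdist_le_EFin[f' [psi_f' f'g]].
move: mphi mpsi; rewrite phi_f psi_f' => /measurable_EFinP mf /measurable_EFinP mf'.
apply: ge_ereal_sup => _ [y _ <-]; rewrite -EFinB abse_EFin lee_fin.
apply: ce_transform_dist_le => //; first exact: ltW.
- exact: measurableT_comp hc_meas (pair2_measurable y).
- move=> x; apply: le_trans (ler_distD (g x) _ _) _.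
  by rewrite [leRHS](splitr delta) lerD // distrC.
Qed.
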